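(* Let $[x]t$ be a normal planar term (NPT) with $R$-coloring $\pi$. Then exactly one of the following cases holds: (i) $[x]t$ is the identity term ($t=x$) and $|\pi| = |\mathrm{ONH}(\pi)| = 1$; (ii) $[x]t = \mathrm{FO}([x_1]t_1,[x_2]t_2)$ for some NPTs $[x_1]t_1$ and $[x_2]t_2$ with $R$-colorings $\pi_1,\pi_2$ such that $|\pi| = |\pi_1|+|\pi_2|$ and $|\mathrm{ONH}(\pi)| = 1 + |\mathrm{ONH}(\pi_1)| + |\mathrm{ONH}(\pi_2)|$; (iii) $[x]t = \mathrm{VO}_k([x_1]t_1)$ for some NPT $[x_1]t_1$ with $R$-coloring $\pi_1$ and some $1\le k\le |\mathrm{ONH}(\pi_1)|$ such that $|\pi| = 1+|\pi_1|$ and $|\mathrm{ONH}(\pi)| = k+1$.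
   Context: Lambda skeletons: graded sets $\mathrm{SLam}(i)$, least such that $\_ \in \mathrm{SLam}(1)$; $p\in\mathrm{SLam}(j), q\in\mathrm{SLam}(k)\Rightarrow p(q)\in\mathrm{SLam}(j+k)$; $p\in\mathrm{SLam}(i+1)\Rightarrow \lambda\_.p\in\mathrm{SLam}(i)$. A planar lambda term with ordered list of free variables $\Gamma$ decorating $p$, written $[\Gamma]t\in\Lambda_1^0(p)$, is defined by: $[x]x\in\Lambda_1^0(\_)$; from $[\Gamma]t\in\Lambda_1^0(p)$, $[\Delta]u\in\Lambda_1^0(q)$ infer $[\Gamma,\Delta]t(u)\in\Lambda_1^0(p(q))$; from $[x,\Gamma]t\in\Lambda_1^0(p)$ infer $[\Gamma]\lambda x.t\in\Lambda_1^0(\lambda\_.p)$; terms are considered modulo renaming of variables. Colorings: $\mathrm{SNeu}(i)$ (blue) and $\mathrm{SNF}(i)$ (red) are defined by rules (v) $\_\in\mathrm{SNeu}(1)$; (a) $p\in\mathrm{SNeu}(j)$, $q\in\mathrm{SNF}(k)\Rightarrow p(q)\in\mathrm{SNeu}(j+k)$; (s) $p\in\mathrm{SNeu}(i)\Rightarrow p\in\mathrm{SNF}(i)$; ($\ell$) $p\in\mathrm{SNF}(i+1)\Rightarrow\lambda\_.p\in\mathrm{SNF}(i)$. A $B$-coloring (resp. $R$-coloring) of a term is a derivation of its skeleton in $\mathrm{SNeu}$ (resp. $\mathrm{SNF}$); neutral/normal terms are those having one. The size $|\pi|$ of a coloring $\pi$ is the number of uses of rule (s). An NPT is a normal planar term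 $[x]t$ with exactly one free variable. Outer neutral handles: a neutral handle of a term is a decomposition of it as a context with one marked occurrence of a neutral subterm, written $C[\langle n\rangle]$. For a neutral or normal planar term $[\Gamma]t$ with coloring $\pi$, the ordered list $\mathrm{ONH}(\pi)$ is defined by induction: if $\pi$ is rule (v) for $[x]x$, $\mathrm{ONH}(\pi)=(\langle x\rangle)$; if $\pi$ ends with rule (a) deriving $[\Gamma,\Delta]t(u)$ from a $B$-coloring $\pi_1$ of $[\Gamma]t$ and an $R$-coloring $\pi_2$ of $[\Delta]u$, then $\mathrm{ONH}(\pi)$ is $\langle t(u)\rangle$, followed by $t(H)$ for each $H$ in $\mathrm{ONH}(\pi_2)$ in order, followed — only when $\Delta$ is empty — by $H(u)$ for each $H$ in $\mathrm{ONH}(\pi_1)$ in order; if $\pi$ ends with rule (s) applied to $\pi_1$, $\mathrm{ONH}(\pi)=\mathrm{ONH}(\pi_1)$; if $\pi$ ends with rule ($\ell$) deriving $[\Gamma]\lambda x.t$ from $\pi_1$ for $[x,\Gamma]t$, $\mathrm{ONH}(\pi)$ is $\lambda x.H$ for each $H$ in $\mathrm{ONH}(\pi_1)$ in order. $|\mathrm{ONH}(\pi)|$ is its length. Operations: $\mathrm{FO}([x_1]t_1,[x_2]t_2)$ is the NPT $[x_1]t_1'$ where $t_1'$ is obtained from $t_1$ by replacing the unique occurrence of $x_1$ by $x_1(\lambda x_2.t_2)$. For an NPT $[x_1]t_1$ with $R$-coloring $\pi_1$ and $1\le k\le|\mathrm{ONH}(\pi_1)|$, if the $k$-th element of $\mathrm{ONH}(\pi_1)$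 is $t_1 = C[\langle n\rangle]$, then $\mathrm{VO}_k([x_1]t_1)$ is the NPT $[x]\lambda x_1.C[n(x)]$ for a fresh variable $x$. *)

From mathcomp Require Import all_boot.
Set Implicit Arguments. Unset Strict Implicit. Unset Printing Implicit Defensive.

(* Planar lambda terms modulo renaming, in nameless form.
   A planar term [Gamma]t is determined (up to renaming) by its skeleton:
   every variable occurrence is the unique variable of its sub-context, and
   [lam] binds the first variable of the body's context.  So a term is
   represented by its skeleton; [Var] is the skeleton "_" (an occurrence). *)
Inductive tm : Type :=
| Var : tm
| App : tm -> tm -> tm
| Lam : tm -> tm.

Inductive SLam : nat -> tm -> Prop :=
| SLam_v : SLam 1 Var
| SLam_a j k p q : SLam j p -> SLam k q -> SLam (j + k) (App p q)
| SLam_l i p : SLam i.+1 p -> SLam i (Lam p).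

(* Colorings: derivations (proof-relevant, in Type) of SNeu / SNF. *)
Inductive SNeu : nat -> tm -> Type :=
| rule_v : SNeu 1 Var
| rule_a j k p q : SNeu j p -> SNF k q -> SNeu (j + k) (App p q)
with SNF : nat -> tm -> Type :=
| rule_s i p : SNeu i p -> SNF i p
| rule_l i p : SNF i.+1 p -> SNF i (Lam p).

Fixpoint size_neu i p (pi : SNeu i p) : nat :=
  match pi with
  | rule_v => 0
  | rule_a _ _ _ _ pi1 pi2 => size_neu pi1 + size_nf pi2
  end
with size_nf i p (pi : SNF i p) : nat :=
  match pi with
  | rule_s _ _ pi1 => (size_neu pi1).+1
  | rule_l _ _ pi1 => size_nf pi1
  end.

Inductive ctx : Type :=
| Hole : ctx
| CAppL : ctx -> tm -> ctx
| CAppR : tm -> ctx -> ctx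
| CLam : ctx -> ctx.

Fixpoint plug (C : ctx) (s : tm) : tm :=
  match C with
  | Hole => s
  | CAppL C u => App (plug C s) u
  | CAppR t C => App t (plug C s)
  | CLam C => Lam (plug C s)
  end.

Definition handle := (ctx * tm)%type.

Fixpoint onh_neu i p (pi : SNeu i p) : seq handle :=
  match pi with
  | rule_v => [:: (Hole, Var)]
  | rule_a _ k t u pi1 pi2 =>
      (Hole, App t u)
        :: [seq (CAppR t h.1, h.2) | h <- onh_nf pi2]
        ++ (if k == 0 then [seq (CAppL h.1 u, h.2) | h <- onh_neu pi1]
            else [::])
  end
with onh_nf i p (pi : SNF i p) : seq handle :=
  match pi with
  | rule_s _ _ pi1 => onh_neu pi1
  | rule_l _ _ pi1 => [seq (CLam h.1, h.2) | h <- onh_nf pi1]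
  end.

Fixpoint nfv (t : tm) : nat :=
  match t with
  | Var => 1
  | App t u => nfv t + nfv u
  | Lam t => (nfv t).-1
  end.

(* Replace the j-th free variable (0-based, in context order) of t by s. *)
Fixpoint repl (j : nat) (t : tm) (s : tm) : tm :=
  match t with
  | Var => if j == 0 then s else Var
  | App t u => if j < nfv t then App (repl j t s) u
               else App t (repl (j - nfv t) u s)
  | Lam t => Lam (repl j.+1 t s)
  end.

(* FO([x1]t1,[x2]t2) = [x1] t1{x1 := x1(lambda x2.t2)} *)
Definition FO (t1 t2 : tm) : tm := repl 0 t1 (App Var (Lam t2)).

(* VO_k([x1]t1) = [x] lambda x1. C[n(x)] where the k-th (1-based)
   element of ONH(pi1) is C[<n>]. *)
Definition VO (k : nat) (t1 : tm) (pi1 : SNF 1 t1) : tm :=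
  let h := nth (Hole, Var) (onh_nf pi1) k.-1 in
  Lam (plug h.1 (App h.2 Var)).

Definition exactly_one3 (A B C : Prop) : Prop :=
  (A \/ B \/ C) /\ ~ (A /\ B) /\ ~ (A /\ C) /\ ~ (B /\ C).

From mathcomp Require Import all_boot zify.

(* A coloring of any positive grade n decomposes in one of three ways: its
   term is a variable; or it arises by substituting x(\lambda y.t2) for its last
   free variable x; or it is C[n(x)] for an outer neutral handle C[<n>] of a
   coloring of grade n-1 and a fresh last variable x.  Simultaneous induction
   on neutral and normal colorings proves this together with the size and
   handle-count equations, and a normal coloring of grade 1 is rule (s) or (l)
   on top of such a decomposition.  The cases are disjoint because the free
   variable of FO(t1,t2) sits in head position, while in VO_k(t1) it is the
   argument of an application. *)

Set Implicit Arguments. Unset Strict Implicit. Unset Printing Implicit Defensive.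

Scheme SNeu_mut := Induction for SNeu Sort Prop
with SNF_mut := Induction for SNF Sort Prop.
Combined Scheme coloring_mut from SNeu_mut, SNF_mut.

Lemma grade_coloring :
  (forall n t, SNeu n t -> nfv t = n /\ 0 < n) /\
  (forall n t, SNF n t -> nfv t = n).
Proof.
apply: (@coloring_mut (fun n t (_ : SNeu n t) => nfv t = n /\ 0 < n)
                      (fun n t (_ : SNF n t) => nfv t = n)).
- by [].
- by move=> j k p q _ [/= -> j_gt0] _ ->; rewrite addn_gt0 j_gt0.
- by move=> i p _ [].
- by move=> i p _ /= ->.
Qed.

Lemma nfv_neu n t : SNeu n t -> nfv t = n.
Proof. by move=> /grade_coloring.1 []. Qed.

Lemma neu_grade_gt0 n t : SNeu n t -> 0 < n.
Proof. by move=> /grade_coloring.1 []. Qed.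

Lemma nfv_nf n t : SNF n t -> nfv t = n.
Proof. exact: grade_coloring.2. Qed.

Lemma nfv_repl j t s : j < nfv t -> nfv (repl j t s) = (nfv t).-1 + nfv s.
Proof.
elim: t j => [|a IHa b IHb|a IHa] j /= j_lt.
- by have -> : j = 0 by lia.
- case: ifP => [j_lt_a | /negbT]; rewrite /= ?IHa //; first lia.
  rewrite -leqNgt => a_le_j; rewrite IHb; lia.
- rewrite IHa; lia.
Qed.

Lemma repl_neq_Var j t s : j < nfv t -> s <> Var -> repl j t s <> Var.
Proof.
case: t => [|a b|a] //= j_lt s_Var; first by have -> : j = 0 by lia.
by case: ifP.
Qed.

Fixpoint last_var_is_arg (t : tm) : bool :=
  match t with
  | Var => false
  | App a b =>
      if nfv b == 0 then last_var_is_arg a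
      else if b is Var then true else last_var_is_arg b
  | Lam a => last_var_is_arg a
  end.

Lemma last_var_is_arg_AppR a b :
  0 < nfv b -> last_var_is_arg b -> last_var_is_arg (App a b).
Proof. by move=> /gtn_eqF /= ->; case: b. Qed.

Lemma last_var_is_arg_repl j t s :
  j.+1 = nfv t -> 0 < nfv s -> s <> Var ->
  last_var_is_arg (repl j t s) = last_var_is_arg s.
Proof.
elim: t j => [|a IHa b IHb|a IHa] j /= j_last s_gt0 s_Var.
- by have -> : j = 0 by lia.
- case: ifP => [j_lt_a | /negbT] /=.
    have -> : nfv b == 0 by lia.
    by apply: IHa => //; lia.
  rewrite -leqNgt => a_le_j.
  have b_last : (j - nfv a).+1 = nfv b by lia.
  have b'_gt0 : 0 < nfv (repl (j - nfv a) b s) by rewrite nfv_repl; lia.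
  have b'_Var : repl (j - nfv a) b s <> Var by apply: repl_neq_Var => //; lia.
  rewrite -(IHb _ b_last) // (gtn_eqF b'_gt0).
  by case: (repl _ b s) b'_Var.
- by apply: IHa => //; lia.
Qed.

Lemma FO_neq_Var t1 t2 : 0 < nfv t1 -> FO t1 t2 <> Var.
Proof. by move=> t1_gt0; apply: repl_neq_Var. Qed.

Lemma last_var_is_arg_FO t1 t2 :
  nfv t1 = 1 -> nfv t2 = 1 -> last_var_is_arg (FO t1 t2) = false.
Proof. by move=> t1_1 t2_1; rewrite /FO last_var_is_arg_repl //= t2_1. Qed.

Definition apply_handle (h : handle) : tm := plug h.1 (App h.2 Var).

Lemma apply_handle_CAppR t (h : handle) :
  apply_handle (CAppR t h.1, h.2) = App t (apply_handle h).
Proof. by []. Qed.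

Lemma apply_handle_CAppL u (h : handle) :
  apply_handle (CAppL h.1 u, h.2) = App (apply_handle h) u.
Proof. by []. Qed.

Lemma apply_handle_CLam (h : handle) :
  apply_handle (CLam h.1, h.2) = Lam (apply_handle h).
Proof. by []. Qed.

Definition extends_by_arg n (h : handle) : bool :=
  (nfv (apply_handle h) == n.+1) && last_var_is_arg (apply_handle h).

Lemma sub_all_map T1 T2 (f : T1 -> T2) (a : pred T1) (b : pred T2) s :
  (forall x, a x -> b (f x)) -> all a s -> all b (map f s).
Proof. by move=> ab; rewrite all_map; apply: sub_all. Qed.

Lemma onh_extends_by_arg :
  (forall n t (pi : SNeu n t), all (extends_by_arg n) (onh_neu pi)) /\
  (forall n t (pi : SNF n t), all (extends_by_arg n) (onh_nf pi)).
Proof.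
apply: (@coloring_mut (fun n t pi => all (extends_by_arg n) (onh_neu pi))
                      (fun n t pi => all (extends_by_arg n) (onh_nf pi))).
- by [].
- move=> j k p q p1 IHp q1 IHq; rewrite /= all_cat; apply/and3P; split.
  + by rewrite /extends_by_arg /= (nfv_neu p1) (nfv_nf q1) addn1 eqxx.
  + apply: sub_all_map IHq => h /andP[/eqP h_nfv h_arg].
    rewrite /extends_by_arg apply_handle_CAppR last_var_is_arg_AppR ?h_nfv //.
    by rewrite /= h_nfv addnS (nfv_neu p1) eqxx.
  + case: eqP => [k0|] //; apply: sub_all_map IHp => h /andP[/eqP h_nfv h_arg].
    rewrite /extends_by_arg apply_handle_CAppL /= (nfv_nf q1) k0 /=.
    by rewrite h_nfv !addn0 eqxx.
- by [].
- move=> i p p1 IH; apply: sub_all_map IH => h /andP[/eqP h_nfv h_arg].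
  by rewrite /extends_by_arg apply_handle_CLam /= h_nfv h_arg eqxx.
Qed.

Lemma last_var_is_arg_VO k t1 (pi1 : SNF 1 t1) :
  0 < k <= size (onh_nf pi1) -> last_var_is_arg (VO k pi1).
Proof.
case: k => // k /= k_lt.
by have /andP[_] := all_nthP (Hole, Var) (onh_extends_by_arg.2 _ _ pi1) k k_lt.
Qed.

Section Shape.

Variables (C : nat -> tm -> Type) (sz : forall n t, C n t -> nat)
  (onh : forall n t, C n t -> seq handle) (sz_Var : nat).

(* [s] and [o] stand for the size and the number of outer neutral handles;
   [sz_Var] is the size of the coloring of [Var] (0 for SNeu, 1 for SNF).
   [ShapeFO] is FO at the last free variable, [ShapeVO] is VO_k without its
   outer lambda. *)
Inductive shape n t (s o : nat) : Prop :=
| ShapeVar of t = Var & n = 1 & s = sz_Var & o = 1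
| ShapeFO t1 t2 (pi1 : C n t1) (pi2 : SNF 1 t2) of
    t = repl n.-1 t1 (App Var (Lam t2)) &
    s = sz pi1 + size_nf pi2 & o = (size (onh pi1) + size (onh_nf pi2)).+1
| ShapeVO m t1 (pi1 : C m t1) k of
    n = m.+1 & 0 < k <= size (onh pi1) &
    t = apply_handle (nth (Hole, Var) (onh pi1) k.-1) &
    s = (sz pi1).+1 & o = k.+1.

End Shape.

Arguments ShapeFO {C sz onh sz_Var n t s o t1 t2} pi1 pi2.
Arguments ShapeVO {C sz onh sz_Var n t s o m t1} pi1 k.

Notation neu_shape := (shape (@size_neu) (@onh_neu) 0).
Notation nf_shape := (shape (@size_nf) (@onh_nf) 1).

Lemma size_onh_rule_a j k p q (p1 : SNeu j p) (q1 : SNF k q) :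
  size (onh_neu (rule_a p1 q1)) =
  (size (onh_nf q1) + (if k == 0 then size (onh_neu p1) else 0)).+1.
Proof. by rewrite /= size_cat size_map; case: (k == 0); rewrite ?size_map. Qed.

Lemma apply_handle_onh_neu_head n p (p1 : SNeu n p) :
  apply_handle (nth (Hole, Var) (onh_neu p1) 0) = App p Var.
Proof. by case: p1. Qed.

Lemma size_onh_neu_gt0 n p (p1 : SNeu n p) : 0 < size (onh_neu p1).
Proof. by case: p1. Qed.

Lemma apply_handle_onh_rule_a_arg j k p q (p1 : SNeu j p) (q1 : SNF k q) i :
  0 < i <= size (onh_nf q1) ->
  apply_handle (nth (Hole, Var) (onh_neu (rule_a p1 q1)) i) =
  App p (apply_handle (nth (Hole, Var) (onh_nf q1) i.-1)).
Proof.
case: i => // i /= i_lt.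
by rewrite nth_cat size_map i_lt (nth_map (Hole, Var)).
Qed.

Lemma apply_handle_onh_rule_a_fun j p q (p1 : SNeu j p) (q1 : SNF 0 q) i :
  0 < i <= size (onh_neu p1) ->
  apply_handle (nth (Hole, Var) (onh_neu (rule_a p1 q1)) (size (onh_nf q1) + i)) =
  App (apply_handle (nth (Hole, Var) (onh_neu p1) i.-1)) q.
Proof.
case: i => // i /= i_lt.
by rewrite addnS /= nth_cat size_map ltnNge leq_addr /= addKn (nth_map (Hole, Var)).
Qed.

Lemma apply_handle_onh_rule_l i p (p1 : SNF i.+1 p) k :
  k < size (onh_nf p1) ->
  apply_handle (nth (Hole, Var) (onh_nf (rule_l p1)) k) =
  Lam (apply_handle (nth (Hole, Var) (onh_nf p1) k)).
Proof. by move=> k_lt; rewrite /= (nth_map (Hole, Var)). Qed.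

Lemma closed_nf_Lam k q (q1 : SNF k q) : k = 0 ->
  exists t2 (pi2 : SNF 1 t2), q = Lam t2 /\
    size_nf q1 = size_nf pi2 /\ size (onh_nf q1) = size (onh_nf pi2).
Proof.
case: q1 => [i p p1 | i p p1] i0.
- by exfalso; move: i0 (neu_grade_gt0 p1) => ->.
- by subst i; exists p, p1; rewrite /= size_map.
Qed.

Lemma shape_rule_a_closed j p q (p1 : SNeu j p) (q1 : SNF 0 q) :
  neu_shape j p (size_neu p1) (size (onh_neu p1)) ->
  neu_shape (j + 0) (App p q) (size_neu (rule_a p1 q1)) (size (onh_neu (rule_a p1 q1))).
Proof.
have [t2 [pi2 [q_Lam [sz_q onh_q]]]] := closed_nf_Lam q1 erefl.
rewrite size_onh_rule_a /=.
case=> [p_Var j1 sz_p onh_p | t1 t0 pi1 pi0 p_FO sz_p onh_p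
       | m t1 pi1 i j_m i_le p_VO sz_p onh_p].
- subst j; apply: (ShapeFO rule_v pi2).
  + by rewrite p_Var q_Lam.
  + by rewrite sz_p sz_q.
  + by rewrite onh_p onh_q addnC.
- apply: (ShapeFO (rule_a pi1 q1) pi0).
  + by rewrite /= (nfv_neu pi1) addn0 ltn_predL (neu_grade_gt0 pi1) p_FO.
  + rewrite /= sz_p; lia.
  + rewrite size_onh_rule_a onh_p /=; lia.
- subst j; apply: (ShapeVO (rule_a pi1 q1) (size (onh_nf q1) + i).+1).
  + by rewrite !addn0.
  + by rewrite size_onh_rule_a /=; lia.
  + by rewrite /= apply_handle_onh_rule_a_fun // p_VO.
  + by rewrite /= sz_p.
  + by rewrite onh_p addnS.
Qed.

Lemma shape_rule_a_open j k p q (p1 : SNeu j p) (q1 : SNF k q) : 0 < k ->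
  nf_shape k q (size_nf q1) (size (onh_nf q1)) ->
  neu_shape (j + k) (App p q) (size_neu (rule_a p1 q1)) (size (onh_neu (rule_a p1 q1))).
Proof.
move=> k_gt0; rewrite size_onh_rule_a (gtn_eqF k_gt0) addn0 /=.
case=> [q_Var k1 sz_q onh_q | t1 t2 pi1 pi2 q_FO sz_q onh_q
       | m t1 pi1 i k_m i_le q_VO sz_q onh_q].
- subst k; apply: (ShapeVO p1 1).
  + by rewrite addn1.
  + by rewrite size_onh_neu_gt0.
  + by rewrite apply_handle_onh_neu_head q_Var.
  + by rewrite sz_q addn1.
  + by rewrite onh_q.
- apply: (ShapeFO (rule_a p1 pi1) pi2).
  + rewrite /= (nfv_neu p1) ifN -?leqNgt; last lia.
    by rewrite q_FO; congr (App p (repl _ t1 _)); lia.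
  + by rewrite /= sz_q addnA.
  + by rewrite size_onh_rule_a (gtn_eqF k_gt0) onh_q !addn0 addSn.
- subst k; apply: (ShapeVO (rule_a p1 pi1) i.+1).
  + by rewrite addnS.
  + by rewrite size_onh_rule_a /=; lia.
  + by rewrite apply_handle_onh_rule_a_arg // q_VO.
  + by rewrite /= sz_q addnS.
  + by rewrite onh_q.
Qed.

Lemma shape_rule_a j k p q (p1 : SNeu j p) (q1 : SNF k q) :
  neu_shape j p (size_neu p1) (size (onh_neu p1)) ->
  (0 < k -> nf_shape k q (size_nf q1) (size (onh_nf q1))) ->
  neu_shape (j + k) (App p q) (size_neu (rule_a p1 q1)) (size (onh_neu (rule_a p1 q1))).
Proof.
move=> p_shape q_shape; have [k0 | k_gt0] := posnP k.
- by subst k; apply: shape_rule_a_closed.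
- exact: shape_rule_a_open (q_shape k_gt0).
Qed.

Lemma shape_rule_s n t (p1 : SNeu n t) :
  neu_shape n t (size_neu p1) (size (onh_neu p1)) ->
  nf_shape n t (size_nf (rule_s p1)) (size (onh_nf (rule_s p1))).
Proof.
rewrite /=; case=> [t_Var n1 -> -> | t1 t2 pi1 pi2 t_FO -> ->
                   | m t1 pi1 i n_m i_le t_VO -> ->].
- exact: ShapeVar.
- exact: (ShapeFO (rule_s pi1) pi2).
- exact: (ShapeVO (rule_s pi1) i).
Qed.

Lemma shape_rule_l i p (p1 : SNF i.+2 p) :
  nf_shape i.+2 p (size_nf p1) (size (onh_nf p1)) ->
  nf_shape i.+1 (Lam p) (size_nf (rule_l p1)) (size (onh_nf (rule_l p1))).
Proof.
rewrite /= size_map.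
case=> [// | t1 t2 pi1 pi2 p_FO -> -> | m t1 pi1 k [m_i] k_le p_VO -> ->].
- apply: (ShapeFO (rule_l pi1) pi2) => //=; last by rewrite size_map.
  by rewrite p_FO.
- subst m; apply: (ShapeVO (rule_l pi1) k); rewrite /= ?size_map //.
  by rewrite apply_handle_onh_rule_l ?p_VO //; lia.
Qed.

Lemma shape_coloring :
  (forall n t (pi : SNeu n t), neu_shape n t (size_neu pi) (size (onh_neu pi))) /\
  (forall n t (pi : SNF n t), 0 < n -> nf_shape n t (size_nf pi) (size (onh_nf pi))).
Proof.
apply: (@coloring_mut
  (fun n t pi => neu_shape n t (size_neu pi) (size (onh_neu pi)))
  (fun n t pi => 0 < n -> nf_shape n t (size_nf pi) (size (onh_nf pi)))).
- exact: ShapeVar.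
- by move=> j k p q p1 p_shape q1 q_shape; apply: shape_rule_a.
- by move=> n t p1 p_shape _; apply: shape_rule_s.
- by move=> [|i] p p1 p_shape // _; apply: shape_rule_l (p_shape _).
Qed.

Definition id_shaped n t (pi : SNF n t) : Prop :=
  t = Var /\ size_nf pi = 1 /\ size (onh_nf pi) = 1.

Definition FO_shaped n t (pi : SNF n t) : Prop :=
  exists t1 t2 (pi1 : SNF 1 t1) (pi2 : SNF 1 t2),
    t = FO t1 t2 /\
    size_nf pi = size_nf pi1 + size_nf pi2 /\
    size (onh_nf pi) = 1 + size (onh_nf pi1) + size (onh_nf pi2).

Definition VO_shaped n t (pi : SNF n t) : Prop :=
  exists t1 (pi1 : SNF 1 t1) k,
    1 <= k <= size (onh_nf pi1) /\
    t = VO k pi1 /\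
    size_nf pi = 1 + size_nf pi1 /\
    size (onh_nf pi) = k + 1.

Lemma npt_shaped n t (pi : SNF n t) : n = 1 ->
  id_shaped pi \/ FO_shaped pi \/ VO_shaped pi.
Proof.
case: pi => [i p p1 | i p p1] i1; subst i.
- case: (shape_coloring.1 _ _ p1)
    => [p_Var _ sz_p onh_p | t1 t2 pi1 pi2 p_FO sz_p onh_p | m t1 pi1 k [m0] _ _ _ _].
  + by left; rewrite /id_shaped /= sz_p onh_p.
  + by right; left; exists t1, t2, (rule_s pi1), pi2; rewrite /= sz_p onh_p.
  + by subst m; have := neu_grade_gt0 pi1.
- case: (shape_coloring.2 _ _ p1 isT)
    => [// | t1 t2 pi1 pi2 p_FO sz_p onh_p | m t1 pi1 k [m1] k_le p_VO sz_p onh_p].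
  + right; left; exists (Lam t1), t2, (rule_l pi1), pi2.
    by rewrite /= !size_map sz_p onh_p p_FO.
  + subst m; right; right; exists t1, pi1, k.
    by rewrite /= size_map sz_p onh_p p_VO addn1.
Qed.

Theorem theorem4p12 (t : tm) (pi : SNF 1 t) :
  exactly_one3
    (t = Var /\ size_nf pi = 1 /\ size (onh_nf pi) = 1)
    (exists (t1 t2 : tm) (pi1 : SNF 1 t1) (pi2 : SNF 1 t2),
        t = FO t1 t2 /\
        size_nf pi = size_nf pi1 + size_nf pi2 /\
        size (onh_nf pi) = 1 + size (onh_nf pi1) + size (onh_nf pi2))
    (exists (t1 : tm) (pi1 : SNF 1 t1) (k : nat),
        1 <= k <= size (onh_nf pi1) /\
        t = VO k pi1 /\
        size_nf pi = 1 + size_nf pi1 /\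
        size (onh_nf pi) = k + 1).
Proof.
split; first exact: npt_shaped.
split; last split.
- case=> [[t_Var _] [t1 [t2 [pi1 [_ [t_FO _]]]]]].
  by apply: (@FO_neq_Var t1 t2); rewrite ?(nfv_nf pi1) // -t_FO.
- by case=> [[t_Var _] [t1 [pi1 [k [_ [t_VO _]]]]]]; rewrite t_Var in t_VO.
- case=> [[t1 [t2 [pi1 [pi2 [t_FO _]]]]] [t1' [pi1' [k [k_le [t_VO _]]]]]].
  have := last_var_is_arg_VO k_le.
  by rewrite -t_VO t_FO last_var_is_arg_FO ?(nfv_nf pi1) ?(nfv_nf pi2).
Qed.
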